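(* Let $G=(V,E)$ be a simple undirected graph and let $E'\subseteq E^c$ be such that $G+E'$ is not chordal and $G+(E'\setminus\{f\})$ is chordal for every $f\in E'$. If $ax\ge b$ is facet-defining for $\textnormal{conv}(X(G+E'))$ with $a\ge 0$, and $a'\in\mathbb{R}^{E^c}$ is given by $a'_f=a_f$ if $f\in E^c\setminus E'$ and $a'_f=0$ otherwise, then the inequality $$a'x\ \ge\ b\Big(\sum_{f\in E'}x_f-|E'|+1\Big)$$ is facet-defining for $\textnormal{conv}(X(G))$.
   Context: For a graph $H=(V_H,E_H)$, $E^c(H)=\binom{V_H}{2}\setminus E_H$ (here $E^c=E^c(G)$, and $E^c(G+E')=E^c\setminus E'$); $H+F=(V_H,E_H\cup F)$. For $x\in\{0,1\}^{E^c(H)}$, $E(x)=\{f:x_f=1\}$ and $X(H)=\{x\in\{0,1\}^{E^c(H)}:(V_H,E_H\cup E(x))\text{ is chordal}\}$; a graph is chordal if every cycle with at least four vertices has a chord. *)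

From HB Require Import structures.
From mathcomp Require Import all_boot all_order all_algebra.
Set Implicit Arguments. Unset Strict Implicit. Unset Printing Implicit Defensive.
Import Order.TTheory GRing.Theory Num.Theory.
Local Open Scope ring_scope.

(* A simple undirected graph on the finite vertex type V is given by its edge
   set E : {set {set V}}, every edge being a 2-element subset of V. *)

Definition adj (V : finType) (E : {set {set V}}) (u v : V) : bool :=
  (u != v) && ([set u; v] \in E).

Definition is_cycle4 (V : finType) (E : {set {set V}}) (s : seq V) : bool :=
  [&& uniq s, (4 <= size s)%N & cycle (adj E) s].

Definition has_chord (V : finType) (E : {set {set V}}) (s : seq V) : Prop :=
  exists x y, [/\ x \in s, y \in s, adj E x y, y != next s x & x != next s y].

Definition chordal (V : finType) (E : {set {set V}}) : Prop :=
  forall s : seq V, is_cycle4 E s -> has_chord E s.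

Definition Ecomp (V : finType) (E : {set {set V}}) : {set {set V}} :=
  [set e : {set V} | (#|e| == 2) && (e \notin E)].

(* Vectors of R^{E^c(H)} are represented as functions on all subsets of V
   which vanish outside E^c(H) (a coordinate subspace embedding). *)
Notation vec V R := ({ffun {set V} -> R}).

Definition dot (V : finType) (R : numDomainType) (a x : vec V R) : R :=
  \sum_(e : {set V}) a e * x e.

Definition Eof (V : finType) (R : numDomainType) (E : {set {set V}}) (x : vec V R)
  : {set {set V}} := [set e in Ecomp E | x e == 1].

Definition Xset (V : finType) (R : numDomainType) (E : {set {set V}}) (x : vec V R)
  : Prop :=
  [/\ (forall e, e \in Ecomp E -> x e = 0 \/ x e = 1),
      (forall e, e \notin Ecomp E -> x e = 0) &
      chordal (E :|: Eof E x)].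

Definition conv (V : finType) (R : numDomainType) (S : vec V R -> Prop) (x : vec V R)
  : Prop :=
  exists n (p : 'I_n -> vec V R) (l : 'I_n -> R),
    [/\ forall i, S (p i), forall i, 0 <= l i, \sum_i l i = 1 &
        forall e, x e = \sum_i l i * p i e].

Definition aff_indep (V : finType) (R : numDomainType) n (p : 'I_n -> vec V R) : Prop :=
  forall l : 'I_n -> R, \sum_i l i = 0 ->
    (forall e, \sum_i l i * p i e = 0) -> forall i, l i = 0.

(* affrank S k : the maximum number of affinely independent points of S is k
   (so the affine dimension of S is k - 1). *)
Definition affrank (V : finType) (R : numDomainType) (S : vec V R -> Prop) (k : nat)
  : Prop :=
  (exists p : 'I_k -> vec V R, (forall i, S (p i)) /\ aff_indep p) /\
  (forall m (p : 'I_m -> vec V R), (forall i, S (p i)) -> aff_indep p -> (m <= k)%N).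

Definition facet_defining (V : finType) (R : numDomainType) (P : vec V R -> Prop)
  (g h : vec V R -> R) : Prop :=
  (forall x, P x -> h x <= g x) /\
  exists k, affrank P k.+1 /\ affrank (fun x => P x /\ g x = h x) k.

(* Write 1_S for the indicator vector of a set S of non-edges.  The polytope
   conv X(H) is full-dimensional in R^{E^c(H)}: the points 1_{E^c(H)} and
   1_{E^c(H) \ e} are affinely independent, and each is the incidence vector of
   a graph missing at most one edge, hence chordal.
   The lifted inequality is valid on X(G) by a case split: a point equal to 1 on
   E' restricts to a point of X(G+E'), where ax >= b; otherwise the right-hand
   side is <= 0 <= a'x, as b >= 0.  The face it defines contains the points of
   the facet of conv X(G+E') set to 1 on E', together with the points
   1_{E' \ f}, f in E' (chordal by minimality of E'), which add |E'| new affine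
   directions.  Conversely that face lies in the hyperplane
   (a' - b 1_{E'}) x = b (1 - |E'|), which is proper because the facet normal a
   cannot vanish on E^c(G+E') when G+E' is not chordal. *)

From HB Require Import structures.
From mathcomp Require Import all_boot all_order all_algebra ring lra.
Import Order.TTheory GRing.Theory Num.Theory.
Set Implicit Arguments. Unset Strict Implicit. Unset Printing Implicit Defensive.
Local Open Scope ring_scope.

Definition indic (R : numDomainType) (V : finType) (S : {set {set V}}) : vec V R :=
  [ffun e => (e \in S)%:R].
Arguments indic R {V} S.

Definition append_indic (R : numDomainType) (V : finType) m (p : 'I_m -> vec V R)
  (D : {set {set V}}) (i : 'I_(m + #|D|)) : vec V R :=
  match split i with inl j => p j | inr j => indic R (D :\ enum_val j) end.
Arguments append_indic {R V m} p D i.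

Section AffineIndependence.
Variables (R : realFieldType) (V : finType).

Definition aff_indep_on (D : {set {set V}}) m (p : 'I_m -> vec V R) : Prop :=
  forall l : 'I_m -> R, \sum_i l i = 0 ->
    (forall e, e \in D -> \sum_i l i * p i e = 0) -> forall i, l i = 0.

Lemma aff_indep_on_card_leq D m (p : 'I_m -> vec V R) :
  aff_indep_on D p -> (m <= #|D|.+1)%N.
Proof.
move=> indep.
pose M : 'M[R]_(m, #|D|.+1) := \matrix_(i, j)
  if unlift ord0 j is Some j' then p i (enum_val j') else 1.
suff /eqP <- : row_free M by apply: rank_leq_col.
apply: inj_row_free => v /matrixP vM0; apply/rowP => i; rewrite mxE.
apply: (indep (fun i => v 0 i)) => [|e De].
  transitivity ((v *m M) 0 ord0); last by rewrite vM0 mxE.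
  by rewrite mxE; apply: eq_bigr => k _; rewrite mxE unlift_none mulr1.
transitivity ((v *m M) 0 (lift ord0 (enum_rank_in De e))); last by rewrite vM0 mxE.
by rewrite mxE; apply: eq_bigr => k _; rewrite mxE liftK enum_rankK_in.
Qed.

Lemma aff_indep_on_supp (D : {set {set V}}) m (p : 'I_m -> vec V R) :
  (forall i e, e \notin D -> p i e = 0) -> aff_indep p -> aff_indep_on D p.
Proof.
move=> p0 indep l l0 lD; apply: indep => // e.
have [/lD //|eD] := boolP (e \in D).
by rewrite big1 // => i _; rewrite p0 ?mulr0.
Qed.

Lemma dot_comb n (w : vec V R) (l : 'I_n -> R) (p : 'I_n -> vec V R) :
  \sum_e w e * (\sum_i l i * p i e) = \sum_i l i * dot w (p i).
Proof.
under eq_bigr do rewrite mulr_sumr.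
rewrite exchange_big; apply: eq_bigr => i _; rewrite mulr_sumr.
by apply: eq_bigr => e _; rewrite mulrCA.
Qed.

Lemma aff_indep_on_hyperplane (D : {set {set V}}) m (p : 'I_m -> vec V R)
    (g : vec V R) c e0 :
  (forall i e, e \notin D -> p i e = 0) -> (forall i, dot g (p i) = c) ->
  e0 \in D -> g e0 != 0 -> aff_indep p -> aff_indep_on (D :\ e0) p.
Proof.
move=> p0 pg De0 ge0 indep l l0 lD.
have comb0 e : e != e0 -> \sum_i l i * p i e = 0.
  move=> ne0; have [eD|eD] := boolP (e \in D); first by apply: lD; rewrite !inE ne0.
  by rewrite big1 // => i _; rewrite p0 ?mulr0.
apply: indep => // e; have [->|/comb0 //] := eqVneq e e0.
have := dot_comb g l p; under [RHS]eq_bigr do rewrite pg.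
rewrite -mulr_suml l0 mul0r (bigD1 e0) //= [X in _ + X]big1 ?addr0; last first.
  by move=> f /comb0 ->; rewrite mulr0.
by move/eqP; rewrite mulf_eq0 (negPf ge0) => /eqP.
Qed.

Lemma append_indic_lshift m (p : 'I_m -> vec V R) (D : {set {set V}}) j :
  append_indic p D (lshift #|D| j) = p j.
Proof. by rewrite /append_indic (unsplitK (inl _ j)). Qed.

Lemma append_indic_rshift m (p : 'I_m -> vec V R) (D : {set {set V}}) j :
  append_indic p D (rshift m j) = indic R (D :\ enum_val j).
Proof. by rewrite /append_indic (unsplitK (inr _ j)). Qed.

Lemma append_indic_ind (P : vec V R -> Prop) m (p : 'I_m -> vec V R)
    (D : {set {set V}}) :
  (forall j, P (p j)) -> (forall j : 'I_#|D|, P (indic R (D :\ enum_val j))) ->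
  forall i, P (append_indic p D i).
Proof. by move=> Pp PD i; rewrite /append_indic; case: (split i). Qed.

Lemma aff_indep_append_indic m (p : 'I_m -> vec V R) (D : {set {set V}}) :
  (forall i e, e \in D -> p i e = 1) -> aff_indep_on (~: D) p ->
  aff_indep (append_indic p D).
Proof.
move=> p1 indep l; rewrite big_split_ord /= => l0 comb.
(* At the coordinate [enum_val j0] the combination equals [\sum_i l i - l j0]. *)
have lr j0 : l (rshift m j0) = 0.
  have := comb (enum_val j0); rewrite big_split_ord /=.
  under eq_bigr do rewrite append_indic_lshift p1 ?enum_valP // mulr1.
  under [X in _ + X = _]eq_bigr do
    rewrite append_indic_rshift ffunE !inE enum_valP (inj_eq enum_val_inj) andbT.
  rewrite (bigD1 j0) //= eqxx mulr0 add0r.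
  under [X in _ + X = _]eq_bigr => j /negPf nj do rewrite eq_sym nj mulr1.
  move: l0; rewrite (bigD1 j0) //=; lra.
have ll j : l (lshift #|D| j) = 0.
  apply: (indep (fun j => l (lshift #|D| j))) => [|e].
    by move: l0; rewrite [X in _ + X]big1 ?addr0 // => j _; apply: lr.
  rewrite inE => eD; rewrite -[RHS](comb e) big_split_ord /= [X in _ + X]big1 ?addr0.
    by apply: eq_bigr => i _; rewrite append_indic_lshift.
  by move=> i _; rewrite lr mul0r.
by move=> i; rewrite -(splitK i); case: (split i) => j; [apply: ll | apply: lr].
Qed.

Lemma affrank_uniq (P : vec V R -> Prop) k1 k2 :
  affrank P k1 -> affrank P k2 -> k1 = k2.
Proof.
move=> [[p1 [Pp1 ind1]] le1] [[p2 [Pp2 ind2]] le2].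
by apply/eqP; rewrite eqn_leq (le2 _ _ Pp1 ind1) (le1 _ _ Pp2 ind2).
Qed.

End AffineIndependence.

Section ConvexHulls.
Variables (R : realFieldType) (V : finType).
Implicit Types (S : {set {set V}}) (x : vec V R).

Lemma mem_conv (P : vec V R -> Prop) x : P x -> conv P x.
Proof.
move=> Px; exists 1%N, (fun=> x), (fun=> 1); split=> //; first by rewrite big_ord1.
by move=> e; rewrite big_ord1 mul1r.
Qed.

Definition affine_fun (f : vec V R -> R) : Prop :=
  exists w c, forall x, f x = dot w x + c.

Lemma conv_affine_le (P : vec V R -> Prop) f g :
  affine_fun f -> affine_fun g -> (forall x, P x -> f x <= g x) ->
  forall x, conv P x -> f x <= g x.
Proof.
move=> [u [c fE]] [w [d gE]] le x [n [p [l [Pp l0 l1 xE]]]].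
have comb v c' : dot v x + c' = \sum_i l i * (dot v (p i) + c').
  under eq_bigr do rewrite mulrDr.
  rewrite big_split /= -mulr_suml l1 mul1r -dot_comb.
  by congr (_ + _); apply: eq_bigr => e _; rewrite xE.
rewrite fE gE !comb; apply: ler_sum => i _.
by rewrite ler_wpM2l // -fE -gE le.
Qed.

Lemma dotBl (u w : vec V R) x : dot [ffun e => u e - w e] x = dot u x - dot w x.
Proof. by rewrite /dot -sumrB; apply: eq_bigr => e _; rewrite ffunE mulrBl. Qed.

Lemma dot_indicl S x : dot (indic R S) x = \sum_(e in S) x e.
Proof.
rewrite /dot [RHS]big_mkcond; apply: eq_bigr => e _.
by rewrite ffunE; case: (e \in S); rewrite ?mul1r ?mul0r.
Qed.

End ConvexHulls.

Lemma EcompU (V : finType) (H S : {set {set V}}) : Ecomp (H :|: S) = Ecomp H :\: S.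
Proof.
by apply/setP => e; rewrite !inE negb_or; case: (e \in S); rewrite ?andbF ?andbT.
Qed.

(* The pairs {y0, y2} and {y1, y3} of a cycle y0 y1 y2 y3 ... are two distinct
   chord candidates, so at least one of them is an edge. *)
Lemma chordal_Ecomp_sub1 (V : finType) (H : {set {set V}}) (f : {set V}) :
  Ecomp H \subset [set f] -> chordal H.
Proof.
move=> Hf s /and3P[+ +] _.
case: s => [|y0 [|y1 [|y2 [|y3 r]]]] //= /and5P[+ + + _ _] _.
rewrite !inE !negb_or => /and4P[n01 n02 n03 n0r] /and3P[n12 n13 n1r] /andP[n23 _].
have adjH u v : u != v -> [set u; v] != f -> adj H u v.
  move=> uv uvf; rewrite /adj uv; apply: contraR uvf => uvH.
  by rewrite -in_set1 (subsetP Hf) // inE cards2 uv uvH.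
have [f02 | nf02] := eqVneq [set y0; y2] f; last first.
  exists y0, y2; split; rewrite ?inE ?eqxx ?orbT ?adjH //.
    by rewrite /next /= eqxx eq_sym.
  by rewrite /next /= (eq_sym y2 y0) (negPf n02) (eq_sym y2 y1) (negPf n12) eqxx.
exists y1, y3; split; rewrite ?inE ?eqxx ?orbT //.
- apply: adjH n13 _; rewrite -f02; apply: contraNneq n12 => /setP/(_ y1).
  by rewrite !inE eqxx (eq_sym y1 y0) (negPf n01) => /esym.
- by rewrite /next /= (eq_sym y1 y0) (negPf n01) eqxx eq_sym.
rewrite /next /= (eq_sym y3 y0) (negPf n03) (eq_sym y3 y1) (negPf n13).
rewrite (eq_sym y3 y2) (negPf n23).
case: r {n0r} n1r => [|z r]; rewrite /= eqxx; first by rewrite eq_sym.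
by rewrite inE negb_or => /andP[].
Qed.

Section ChordalCompletions.
Variables (R : realFieldType) (V : finType).
Implicit Types (H S : {set {set V}}) (x : vec V R).

Lemma conv_Xset_supp H x e : conv (Xset H) x -> e \notin Ecomp H -> x e = 0.
Proof.
case=> n [p [l [Xp _ _ ->]]] eH; rewrite big1 // => i _.
by case: (Xp i) => _ p0 _; rewrite p0 ?mulr0.
Qed.

Lemma conv_Xset_ge0 H x e : conv (Xset H) x -> 0 <= x e.
Proof.
case=> n [p [l [Xp l0 _ ->]]]; rewrite sumr_ge0 // => i _.
apply: mulr_ge0 => //; case: (Xp i) => p01 p0 _.
have [/p01[]->|eH] := boolP (e \in Ecomp H); by rewrite ?p0.
Qed.

Lemma conv_Xset_dot_ge0 H (a : vec V R) x :
  {in Ecomp H, forall e, 0 <= a e} -> conv (Xset H) x -> 0 <= dot a x.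
Proof.
move=> a0 Px; apply: sumr_ge0 => e _.
have [/a0 ae0|eH] := boolP (e \in Ecomp H); last by rewrite (conv_Xset_supp Px eH) mulr0.
by rewrite mulr_ge0 // (conv_Xset_ge0 _ Px).
Qed.

Lemma Eof_indic H S : S \subset Ecomp H -> Eof H (indic R S) = S.
Proof.
move=> sS; apply/setP => e; rewrite inE ffunE pnatr_eq1 eqb1.
by apply/andP/idP => [[]//|eS]; split=> //; apply: (subsetP sS).
Qed.

Lemma Xset_indic H S :
  S \subset Ecomp H -> chordal (H :|: S) -> Xset (R:=R) H (indic R S).
Proof.
move=> sS chS; split; last by rewrite Eof_indic.
- by move=> e _; rewrite ffunE; case: (e \in S); [right | left].
by move=> e eH; rewrite ffunE (negPf (contraNN (subsetP sS e) eH)).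
Qed.

Lemma Xset_indic_almost_full H S g :
  S \subset Ecomp H -> Ecomp H :\: S \subset [set g] -> Xset (R:=R) H (indic R S).
Proof.
move=> sS co1; apply: Xset_indic => //.
by apply: (chordal_Ecomp_sub1 (f := g)); rewrite EcompU.
Qed.

Lemma affrank_conv_Xset H : affrank (conv (Xset (R:=R) H)) #|Ecomp H|.+1.
Proof.
split; last first.
  move=> m p Pp /(aff_indep_on_supp (fun i e => conv_Xset_supp (Pp i))).
  exact: aff_indep_on_card_leq.
pose full : 'I_1 -> vec V R := fun=> indic R (Ecomp H).
exists (append_indic full (Ecomp H)); split.
  apply: (append_indic_ind (p := full)) => j; apply: mem_conv.
    by apply: (Xset_indic_almost_full (g := set0)); rewrite ?setDv ?sub0set.
  apply: (Xset_indic_almost_full (g := enum_val j)); first exact: subsetDl.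
  by apply/subsetP => e; rewrite !inE; case: (e == enum_val j); rewrite /= ?andNb.
apply: (aff_indep_append_indic (p := full)) => [i e|l]; first by rewrite ffunE => ->.
by rewrite big_ord1 => l0 _ i; rewrite (ord1 i).
Qed.

Lemma affrank_conv_Xset_eq H k :
  affrank (conv (Xset (R:=R) H)) k -> k = #|Ecomp H|.+1.
Proof. by move/affrank_uniq; apply; apply: affrank_conv_Xset. Qed.

Lemma Ecomp_neq0 H : ~ chordal H -> Ecomp H != set0.
Proof.
apply: contra_notN => /eqP H0.
by apply: (chordal_Ecomp_sub1 (f := set0)); rewrite H0 sub0set.
Qed.

End ChordalCompletions.

Definition face (V : finType) (R : numDomainType) (P : vec V R -> Prop)
  (g h : vec V R -> R) (x : vec V R) : Prop := P x /\ g x = h x.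

Section FacetsOfChordalCompletions.
Variables (R : realFieldType) (V : finType) (H : {set {set V}}) (a : vec V R) (b : R).
Hypothesis nchH : ~ chordal H.
Hypothesis facetH : facet_defining (conv (Xset H)) (dot a) (fun=> b).

Lemma facet_Xset_face_point : exists x, face (conv (Xset H)) (dot a) (fun=> b) x.
Proof.
have [_ [k [/affrank_conv_Xset_eq[k_eq] [[F [FF _]] _]]]] := facetH.
have k_gt0 : (0 < k)%N by rewrite k_eq card_gt0 Ecomp_neq0.
by exists (F (Ordinal k_gt0)).
Qed.

(* Otherwise [dot a] vanishes on the polytope, so the face is empty or the
   whole polytope. *)
Lemma facet_Xset_coef_neq0 : exists2 e, e \in Ecomp H & a e != 0.
Proof.
apply/exists_inP; apply: contraPT nchH => /exists_inPn a0 _.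
have dot0 x : conv (Xset H) x -> dot a x = 0.
  move=> Px; rewrite /dot big1 // => e _.
  have [/a0/negPn/eqP->|eH] := boolP (e \in Ecomp H); first by rewrite mul0r.
  by rewrite (conv_Xset_supp Px eH) mulr0.
have [x0 [Px0 ax0]] := facet_Xset_face_point.
have [_ [k [[[P [PP indP]] _] [_ leF]]]] := facetH.
have PF i : face (conv (Xset H)) (dot a) (fun=> b) (P i).
  by split; rewrite // dot0 // -ax0 dot0.
by have := leF _ P PF indP; rewrite ltnn.
Qed.

End FacetsOfChordalCompletions.

Section Lifting.
Variables (R : realFieldType) (V : finType) (E E' : {set {set V}}).
Hypothesis sE' : E' \subset Ecomp E.
Implicit Types x y : vec V R.

Definition lift_pt x : vec V R := [ffun e => if e \in E' then 1 else x e].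
Definition proj_pt x : vec V R := [ffun e => if e \in E' then 0 else x e].

Lemma Xset_lift_proj x y :
  {in E', forall f, x f = 1} -> {in E', forall f, y f = 0} ->
  (forall e, e \notin E' -> x e = y e) -> Xset E x <-> Xset (E :|: E') y.
Proof.
move=> x1 y0 xy.
have EcompE' e : e \in E' -> e \in Ecomp E := subsetP sE' e.
have EofE : E :|: Eof E x = (E :|: E') :|: Eof (E :|: E') y.
  apply/setP => e; rewrite /Eof EcompU !inE.
  have [eE'|eE'] := boolP (e \in E'); last by rewrite orbF xy.
  by rewrite x1 // eqxx andbT; move: (EcompE' e eE'); rewrite inE => ->; rewrite !orbT.
rewrite /Xset EcompU -EofE; split=> -[x01 x0 chx]; split=> // e.
- by rewrite inE => /andP[eE' eC]; rewrite -xy //; apply: x01.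
- rewrite inE negb_and negbK => /orP[/y0 // | eC].
  by have [/y0 //|eE'] := boolP (e \in E'); rewrite -xy // x0.
- have [/x1 -> _|eE' eC] := boolP (e \in E'); first by right.
  by rewrite xy //; apply: x01; rewrite inE eE'.
move=> eC; rewrite xy; last by apply: contraNN eC; apply: EcompE'.
by apply: x0; rewrite inE negb_and eC orbT.
Qed.

Lemma card_Ecomp_setU : #|Ecomp E| = (#|Ecomp (E :|: E')| + #|E'|)%N.
Proof. by rewrite EcompU cardsD (setIidPr sE') subnK // subset_leq_card. Qed.

Lemma Xset_lift_pt x : Xset (E :|: E') x -> Xset E (lift_pt x).
Proof.
move=> Xx; apply/(Xset_lift_proj (y := x)) => // [f fE'|f fE'|e eE'].
- by rewrite ffunE fE'.
- by case: Xx => _ x0 _; rewrite x0 // EcompU inE fE'.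
by rewrite ffunE (negPf eE').
Qed.

Lemma Xset_proj_pt x :
  Xset E x -> {in E', forall f, x f = 1} -> Xset (E :|: E') (proj_pt x).
Proof.
move=> Xx x1; apply/(Xset_lift_proj x1) => // [f fE'|e eE'].
  by rewrite ffunE fE'.
by rewrite ffunE (negPf eE').
Qed.

Lemma conv_lift_pt x : conv (Xset (E :|: E')) x -> conv (Xset E) (lift_pt x).
Proof.
case=> n [p [l [Xp l0 l1 xE]]]; exists n, (lift_pt \o p), l; split=> // [i|e].
  exact: Xset_lift_pt.
rewrite ffunE; under eq_bigr do rewrite ffunE.
by case: (e \in E'); [under eq_bigr do rewrite mulr1 | rewrite xE].
Qed.

Section LiftedInequality.
Variables (a : vec V R) (b : R).
Local Notation a' := [ffun f => if f \in Ecomp E :\: E' then a f else 0].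
Local Notation rhs x := (b * (\sum_(f in E') x f - #|E'|%:R + 1)).
Local Notation bE' := [ffun e => b * indic R E' e].

Lemma rhs_affine x : rhs x = dot bE' x + b * (1 - #|E'|%:R).
Proof.
have -> : dot bE' x = b * dot (indic R E') x.
  by rewrite /dot mulr_sumr; apply: eq_bigr => e _; rewrite ffunE mulrA.
by rewrite dot_indicl; ring.
Qed.

Lemma dot_lift_pt x : conv (Xset (E :|: E')) x -> dot a' (lift_pt x) = dot a x.
Proof.
move=> Px; apply: eq_bigr => e _; rewrite !ffunE -EcompU.
have [eC|eC] := ifP; last by rewrite mul0r (conv_Xset_supp Px) ?eC ?mulr0.
by move: eC; rewrite EcompU inE => /andP[/negPf ->].
Qed.

Lemma rhs_lift_pt x : rhs (lift_pt x) = b.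
Proof.
under eq_bigr => f fE' do rewrite ffunE fE'.
by rewrite sumr_const subrr add0r mulr1.
Qed.

Lemma dot_indic_drop f : dot a' (indic R (E' :\ f)) = 0.
Proof.
rewrite /dot big1 // => e _; rewrite !ffunE !inE.
by case: (e \in E'); rewrite /= ?andbF ?mul0r ?mulr0.
Qed.

Lemma rhs_indic_drop f : f \in E' -> rhs (indic R (E' :\ f)) = 0.
Proof.
move=> fE'; rewrite (big_setD1 f) //= ffunE !inE eqxx add0r.
under eq_bigr => e eE'f do rewrite ffunE eE'f.
by rewrite sumr_const (cardsD1 f E') fE' /= natrD; ring.
Qed.

Hypothesis valid : forall x, conv (Xset (E :|: E')) x -> b <= dot a x.
Hypothesis b_ge0 : 0 <= b.
Hypothesis a_ge0 : {in Ecomp (E :|: E'), forall f, 0 <= a f}.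

Lemma lifted_valid_Xset x : Xset E x -> rhs x <= dot a' x.
Proof.
move=> Xx; have [x01 _ _] := Xx.
have [/forall_inP x1|/forall_inPn[f fE' xf1]] := boolP [forall f in E', x f == 1].
  have {}x1 : {in E', forall f, x f = 1} by move=> f fE'; apply/eqP/x1.
  have Px : conv (Xset (E :|: E')) (proj_pt x) by apply/mem_conv/Xset_proj_pt.
  have -> : x = lift_pt (proj_pt x).
    by apply/ffunP => e; rewrite !ffunE; have [/x1|] := boolP (e \in E').
  by rewrite rhs_lift_pt dot_lift_pt //; apply: valid.
have xf0 : x f = 0 by case: (x01 f (subsetP sE' f fE')) => // xf; rewrite xf eqxx in xf1.
have x_le1 e : e \in E' -> x e <= 1 by move=> /(subsetP sE')/x01[]->.
apply: (@le_trans _ _ 0).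
  have sum_le : \sum_(e in E' :\ f) x e <= #|E' :\ f|%:R.
    rewrite -sum1_card natr_sum ler_sum // => e.
    by rewrite !inE => /andP[_ /x_le1].
  rewrite mulr_ge0_le0 // (big_setD1 f) //= xf0 (cardsD1 f E') fE' natrD /=; lra.
apply: (conv_Xset_dot_ge0 _ (mem_conv Xx)) => e eC; rewrite ffunE.
by case: ifP => eC'; rewrite ?a_ge0 ?EcompU.
Qed.

Lemma lifted_valid : forall x, conv (Xset E) x -> rhs x <= dot a' x.
Proof.
apply: (conv_affine_le (P := Xset E) _ _ lifted_valid_Xset).
  by exists bE', (b * (1 - #|E'|%:R)) => x; apply: rhs_affine.
by exists a', 0 => x; rewrite addr0.
Qed.

Local Notation faceU := (face (conv (Xset (E :|: E'))) (dot a) (fun=> b)).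
Local Notation faceE := (face (conv (Xset E)) (dot a') (fun x => rhs x)).

Hypothesis minE' : forall f, f \in E' -> chordal (E :|: (E' :\ f)).

Lemma lifted_face_indep :
  (exists F : 'I_#|Ecomp (E :|: E')| -> vec V R,
     (forall i, faceU (F i)) /\ aff_indep F) ->
  exists p : 'I_#|Ecomp E| -> vec V R, (forall i, faceE (p i)) /\ aff_indep p.
Proof.
case=> F [FF indF]; rewrite card_Ecomp_setU.
exists (append_indic (lift_pt \o F) E'); split.
  apply: append_indic_ind => j.
    have [PF aF] := FF j; split; first exact: conv_lift_pt.
    by rewrite /= dot_lift_pt // rhs_lift_pt.
  have fE' := enum_valP j; split; last by rewrite dot_indic_drop rhs_indic_drop.
  apply/mem_conv/Xset_indic; last exact: minE'.
  exact: subset_trans (subsetDl _ _) sE'.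
apply: aff_indep_append_indic => [i e eE'|l l0 comb]; first by rewrite /= ffunE eE'.
apply: indF => // e; have [eE'|eE'] := boolP (e \in E').
  by rewrite big1 // => i _; rewrite (conv_Xset_supp (FF i).1) ?mulr0 // EcompU inE eE'.
by rewrite -[RHS](comb e) ?inE //; apply: eq_bigr => i _; rewrite /= ffunE (negPf eE').
Qed.

Lemma lifted_face_rank_le e0 : e0 \in Ecomp (E :|: E') -> a e0 != 0 ->
  forall m (p : 'I_m -> vec V R), (forall i, faceE (p i)) -> aff_indep p ->
  (m <= #|Ecomp E|)%N.
Proof.
move=> e0C ae0 m p Fp indp.
have [e0E' e0E] : e0 \notin E' /\ e0 \in Ecomp E by apply/andP; rewrite -in_setD -EcompU.
rewrite (cardsD1 e0) e0E; apply: aff_indep_on_card_leq.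
apply: (aff_indep_on_hyperplane (g := [ffun e => a' e - bE' e])
          (c := b * (1 - #|E'|%:R)) _ _ e0E _ indp).
- by move=> i e; apply: conv_Xset_supp (Fp i).1.
- by move=> i; rewrite dotBl; have [_ ->] := Fp i; rewrite rhs_affine addrC addKr.
by rewrite !ffunE -EcompU e0C (negPf e0E') mulr0 subr0.
Qed.

End LiftedInequality.

End Lifting.

Unset Implicit Arguments.

Theorem mainTheorem14 (R : realFieldType) (V : finType) (E E' : {set {set V}})
  (a : {ffun {set V} -> R}) (b : R) :
  (forall e, e \in E -> #|e| = 2)%N ->
  E' \subset Ecomp E ->
  ~ chordal (E :|: E') ->
  (forall f, f \in E' -> chordal (E :|: (E' :\ f))) ->
  facet_defining (conv (Xset (R:=R) (E :|: E'))) (dot a) (fun _ => b) ->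
  (forall f, f \in Ecomp (E :|: E') -> 0 <= a f) ->
  let a' : {ffun {set V} -> R} :=
    [ffun f => if f \in Ecomp E :\: E' then a f else 0] in
  facet_defining (conv (Xset (R:=R) E)) (dot a')
    (fun x => b * (\sum_(f in E') x f - #|E'|%:R + 1)).
Proof.
(* Only 2-element sets are ever tested for membership in E (by [adj] and
   [Ecomp]). *)
move=> _ sE' nchU minE' facet a_ge0 a'.
have b_ge0 : 0 <= b.
  have [x0 [Px0 <-]] := facet_Xset_face_point nchU facet.
  exact: conv_Xset_dot_ge0 a_ge0 Px0.
have [e0 e0C ae0] := facet_Xset_coef_neq0 nchU facet.
have [valid [k [/affrank_conv_Xset_eq[->] [indF _]]]] := facet.
split; first exact: lifted_valid.
exists #|Ecomp E|; split; first exact: affrank_conv_Xset.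
split; first exact: lifted_face_indep.
exact: lifted_face_rank_le e0C ae0.
Qed.
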